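(* Let $s\ge1$, $r_1,\dots,r_s$ positive integers and $n_1,\dots,n_s$ real numbers with $0\le n_1<n_2<\cdots<n_{s-1}\le n_s-1$, and put $f(x)=(x-n_1)^{r_1}(x-n_2)^{r_2}\cdots(x-n_s)^{r_s}\in\mathbb R[x]$. For a nonconstant polynomial $p$ let $\rho(p)$ denote the maximum modulus of its complex roots. Then: (1) $f(x)-1$ has a unique real root $x_0$ in the interval $(n_s,n_s+1]$, and $\rho(f(x)-1)=x_0$. (2) If $0\le m\le n_s-1$, then $\rho((x-m)f(x)-1)<\rho(f(x)-1)$. (3) $\rho((x-n_s)f(x)-1)\ge\rho(f(x)-1)$, with equality if and only if $s=1$. *)

From HB Require Import structures.
From mathcomp Require Import all_boot all_order all_algebra.
From mathcomp Require Import classical_sets reals.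
From mathcomp Require Import complex.
Set Implicit Arguments. Unset Strict Implicit. Unset Printing Implicit Defensive.
Import Order.TTheory GRing.Theory Num.Theory.
Local Open Scope ring_scope.
Local Open Scope classical_set_scope.

Definition croots (R : realType) (p : {poly R}) : set R[i] :=
  [set z : R[i] | root (map_poly (real_complex R) p) z].

(* rho p = maximum modulus of the complex roots of p
   (for nonconstant p this set of moduli is finite and nonempty,
   so the supremum is its maximum) *)
Definition rho (R : realType) (p : {poly R}) : R :=
  sup [set Normc.normc z | z in croots p].

(* f(x) = prod_{i<s} (x - n_i)^{r_i}, indices 0..s-1 *)
Definition fpoly (R : realType) (s : nat) (r : nat -> nat) (n : nat -> R)
  : {poly R} := \prod_(i < s) ('X - (n i)%:P) ^+ (r i).

From mathcomp Require Import all_boot all_order all_algebra.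
From mathcomp Require Import classical_sets reals.
From mathcomp Require Import complex.
From mathcomp Require Import polyrcf zify lra.
Set Implicit Arguments. Unset Strict Implicit. Unset Printing Implicit Defensive.
Import Order.TTheory GRing.Theory Num.Theory.
Local Open Scope ring_scope.

(* All n_i lie in [0, n_s], so for |z| >= n_s the triangle inequality gives
   |f(z)| >= f(|z|) and |z - m| >= |z| - m, while t |-> f(t) and
   t |-> (t - m) f(t) increase strictly on [n_s, +oo).  Hence no complex root
   of f - 1 (resp. (x - m) f - 1) is longer than its real root in
   (n_s, n_s + 1], which is therefore rho.  For m <= n_s - 1 the real root c
   of (x - m) f(x) = 1 has c - m > 1, so f(c) < 1 = f(x0) and c < x0. *)

Section ComplexModulus.
Variable R : rcfType.
Local Notation rc := (real_complex R).
Local Notation nc := (@Normc.normc R).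

Lemma normcE (z : R[i]) : `|z| = rc (nc z).
Proof. by case: z => a b; rewrite normc_def. Qed.

Lemma normc_real (x : R) : nc (rc x) = `|x|.
Proof. by rewrite /= expr0n /= addr0 sqrtr_sqr. Qed.

Lemma normc_subr_ge (z : R[i]) (a : R) : 0 <= a -> rc (nc z - a) <= `|z - rc a|.
Proof.
move=> a_ge0; have := lerB_dist z (rc a).
by rewrite [`|rc a|]ger0_norm ?ler0c // normcE rmorphB.
Qed.

Lemma normc_prod_subr_ge (k : nat) (e : nat -> nat) (a : nat -> R) (z : R[i]) :
    (forall i, (i < k)%N -> 0 <= a i <= nc z) ->
  rc (\prod_(i < k) (nc z - a i) ^+ e i) <= `|\prod_(i < k) (z - rc (a i)) ^+ e i|.
Proof.
move=> a_bnd; rewrite rmorph_prod normr_prod; apply: ler_prod => i _.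
have /andP[a_ge0 a_le] := a_bnd i (ltn_ord i).
rewrite rmorphXn normrX exprn_ge0 ?ler0c ?subr_ge0 //=.
by apply: lerXn2r; rewrite ?nnegrE ?normr_ge0 ?ler0c ?subr_ge0 ?normc_subr_ge.
Qed.

End ComplexModulus.

Section PolySub1.
Variable F : comNzRingType.
Implicit Types (p : {poly F}) (m x : F).

Lemma root_sub1 p x : root (p - 1) x = (p.[x] == 1).
Proof. by rewrite rootE !hornerE subr_eq0. Qed.

Lemma horner_mulXsub p m x : (('X - m%:P) * p).[x] = (x - m) * p.[x].
Proof. by rewrite !hornerE. Qed.

Lemma root_mulXsub_sub1 p m x :
  root (('X - m%:P) * p - 1) x = ((x - m) * p.[x] == 1).
Proof. by rewrite root_sub1 horner_mulXsub. Qed.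

Lemma map_mulXsub_sub1 (K : comNzRingType) (g : {rmorphism F -> K}) p m :
  map_poly g (('X - m%:P) * p - 1) = ('X - (g m)%:P) * map_poly g p - 1.
Proof. by rewrite rmorphB rmorphM rmorph1 rmorphB /= map_polyX map_polyC. Qed.

End PolySub1.

Lemma poly_eq1_between (R : rcfType) (p : {poly R}) (a b : R) :
  a <= b -> p.[a] = 0 -> 1 <= p.[b] -> exists2 x, a < x <= b & p.[x] = 1.
Proof.
move=> le_ab pa0 pb_ge1.
have [x] : {x | x \in `[a, b] & root (p - 1) x}.
  by apply: polyrcf.poly_ivt => //; rewrite !hornerE pa0 sub0r mulN1r oppr_le0 subr_ge0.
rewrite in_itv /= root_sub1 => /andP[ax xb] /eqP px1.
exists x => //; rewrite xb andbT lt_neqAle ax andbT.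
by apply: contra_eq_neq px1 => <-; rewrite pa0 eq_sym oner_neq0.
Qed.

Lemma prodr_ege1 (R : numDomainType) (I : Type) (t : seq I) (P : pred I) (F : I -> R) :
  (forall i, P i -> 1 <= F i) -> 1 <= \prod_(i <- t | P i) F i.
Proof.
by move=> F_ge1; apply: (big_ind (fun x => 1 <= x)) => // x y; apply: (mulr_egte1 R).1.
Qed.

Section Rho.
Variable R : realType.
Local Notation rc := (real_complex R).
Local Notation nc := (@Normc.normc R).

Lemma rho_le (p : {poly R}) (b : R) : 0 <= b ->
  (forall z, root (map_poly rc p) z -> nc z <= b) -> rho p <= b.
Proof.
move=> b_ge0 bnd; rewrite /rho.
have [->|/set0P ne] := eqVneq [set nc z | z in croots p]%classic set0.
  by rewrite sup0.
by apply: ge_sup => // _ [z pz <-]; exact: bnd.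
Qed.

Lemma rho_ge (p : {poly R}) (b x : R) : 0 <= x -> root p x ->
  (forall z, root (map_poly rc p) z -> nc z <= b) -> x <= rho p.
Proof.
move=> x_ge0 px bnd; apply: ub_le_sup.
  by exists b => _ [z pz <-]; exact: bnd.
exists (rc x); last by rewrite normc_real ger0_norm.
by rewrite /croots /= fmorph_root.
Qed.

Lemma rho_eq_profile (p : {poly R}) (G : R -> R) (a x : R) :
    0 <= a -> a <= x -> root p x -> G x = 1 ->
    (forall u v, a <= u -> u < v -> G u < G v) ->
    (forall z, root (map_poly rc p) z -> a <= nc z -> G (nc z) <= 1) ->
  rho p = x.
Proof.
move=> a_ge0 ax px Gx1 G_incr G_roots.
have roots_le z : root (map_poly rc p) z -> nc z <= x.
  move=> pz; rewrite leNgt; apply/negP => xz.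
  have az : a <= nc z by apply: le_trans (ltW xz).
  by have := G_incr _ _ ax xz; rewrite Gx1 ltNge G_roots.
have x_ge0 : 0 <= x := le_trans a_ge0 ax.
by apply/le_anti; rewrite rho_le //; exact: rho_ge roots_le.
Qed.

End Rho.

Section Nodes.
Variables (R : realType) (s : nat) (n : nat -> R).
Hypothesis n0_ge0 : 0 <= n 0%N.
Hypothesis n_incr : forall i, (i.+2 < s)%N -> n i < n i.+1.
Hypothesis n_gap : (1 < s)%N -> n (s - 2)%N <= n (s - 1)%N - 1.

Lemma nodes_le i j : (j < s - 1)%N -> (i <= j)%N -> n i <= n j.
Proof.
move=> js ij; have i_lt : (i < s - 1)%N by lia.
apply: (@homo_leq_in _ [pred k | k < s - 1]%N n <=%R) ij; rewrite ?inE //.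
- exact: le_trans.
- by move=> ? ? _ + ? /andP[_ ?]; rewrite !inE; lia.
- by move=> k _; rewrite inE => k1; apply/ltW/n_incr; lia.
Qed.

Lemma first_node_le_last (s_gt1 : (1 < s)%N) : n 0%N <= n (s - 1)%N - 1.
Proof. by apply: le_trans (n_gap s_gt1); apply: nodes_le; lia. Qed.

Lemma node_bounds i : (i < s)%N -> 0 <= n i <= n (s - 1)%N.
Proof.
move=> i_lt; have [s_gt1|s_le1] := ltnP 1 s; last first.
  have [-> ->] : i = 0%N /\ (s - 1 = 0)%N by lia.
  by rewrite n0_ge0 lexx.
have n0_le := first_node_le_last s_gt1.
have [i_lt1|i_ge1] := ltnP i (s - 1); last first.
  have -> : i = (s - 1)%N by lia.
  by rewrite lexx andbT; have := le_trans n0_ge0 n0_le; lra.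
have ni_ge : n 0%N <= n i by apply: nodes_le.
have ni_le : n i <= n (s - 2)%N by apply: nodes_le; lia.
have := n_gap s_gt1; have := le_trans n0_ge0 ni_ge; lra.
Qed.

End Nodes.

Section Fpoly.
Variables (R : realType) (s : nat) (r : nat -> nat) (n : nat -> R).
Local Notation rc := (real_complex R).
Local Notation nc := (@Normc.normc R).
Local Notation f := (fpoly s r n).
Local Notation ns := (n (s - 1)%N).

Lemma horner_fpoly x : f.[x] = \prod_(i < s) (x - n i) ^+ r i.
Proof. by rewrite horner_prod; apply: eq_bigr => i _; rewrite !hornerE. Qed.

Lemma horner_map_fpoly z :
  (map_poly rc f).[z] = \prod_(i < s) (z - rc (n i)) ^+ r i.
Proof.
rewrite rmorph_prod horner_prod; apply: eq_bigr => i _.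
by rewrite rmorphXn rmorphB /= map_polyX map_polyC !hornerE.
Qed.

Lemma horner_fpoly_single (s1 : s = 1%N) : f.[ns + 1] = 1.
Proof. by rewrite horner_fpoly s1 big_ord1 addrAC subrr add0r expr1n. Qed.

Hypothesis s_gt0 : (0 < s)%N.
Hypothesis r_gt0 : forall i, (i < s)%N -> (0 < r i)%N.
Hypothesis n_bnd : forall i, (i < s)%N -> 0 <= n i <= ns.

Lemma horner_fpoly_last : f.[ns] = 0.
Proof.
have s1_lt : (s - 1 < s)%N by lia.
by rewrite horner_fpoly (bigD1 (Ordinal s1_lt)) //= subrr expr0n eqn0Ngt r_gt0 ?mul0r.
Qed.

Lemma horner_fpoly_ge0 x : ns <= x -> 0 <= f.[x].
Proof.
move=> le_ns_x; rewrite horner_fpoly; apply: prodr_ge0 => i _; apply: exprn_ge0.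
by have /andP[_ ni_le] := n_bnd (ltn_ord i); rewrite subr_ge0 (le_trans ni_le).
Qed.

Lemma horner_fpoly_lt x y : ns <= x -> x < y -> f.[x] < f.[y].
Proof.
move=> le_ns_x lt_xy; rewrite !horner_fpoly; apply: ltr_prod.
  by apply/hasP; exists (Ordinal s_gt0); rewrite ?mem_index_enum.
move=> i _; have /andP[_ ni_le] := n_bnd (ltn_ord i).
have ni_x : 0 <= x - n i by rewrite subr_ge0 (le_trans ni_le).
by rewrite exprn_ge0 //= ltrXn2r -?lt0n ?r_gt0 ?ltrD2r // (le_trans ni_x) // lerD2r ltW.
Qed.

Lemma horner_fpoly_le_mono :
  {in [pred x | ns <= x] &, {mono horner f : x y / x <= y}}.
Proof. by apply: le_mono_in => x y; rewrite !inE => le_ns_x _; apply: horner_fpoly_lt. Qed.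

Lemma fpoly_factor_shift1_ge1 i : (i < s)%N -> 1 <= (ns + 1 - n i) ^+ r i.
Proof. by move=> /n_bnd /andP[_ ni_le]; apply: exprn_ege1; rewrite lerBrDl lerD2r. Qed.

Lemma horner_fpoly_shift1_ge1 : 1 <= f.[ns + 1].
Proof.
by rewrite horner_fpoly; apply: prodr_ege1 => i _; apply: fpoly_factor_shift1_ge1.
Qed.

Lemma horner_fpoly_shift1_gt1 i : (i < s)%N -> n i < ns -> 1 < f.[ns + 1].
Proof.
move=> i_lt ni_lt; rewrite horner_fpoly (bigD1 (Ordinal i_lt)) //=.
have factor_gt1 : 1 < (ns + 1 - n i) ^+ r i.
  by rewrite exprn_egt1 -?lt0n ?r_gt0 // ltrBrDl ltrD2r.
apply: (lt_le_trans factor_gt1 (ler_peMr _ _)); first exact: le_trans ler01 (ltW factor_gt1).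
by apply: prodr_ege1 => j _; apply: fpoly_factor_shift1_ge1.
Qed.

Lemma last_node_ge0 : 0 <= ns.
Proof.
have s1_lt : (s - 1 < s)%N by lia.
by have /andP[] := n_bnd s1_lt.
Qed.

Lemma horner_mulXsub_fpoly_lt m x y : m <= ns -> ns <= x -> x < y ->
  (x - m) * f.[x] < (y - m) * f.[y].
Proof.
move=> m_le le_ns_x lt_xy.
have := horner_fpoly_ge0 le_ns_x; have := horner_fpoly_lt le_ns_x lt_xy; nra.
Qed.

Lemma normc_horner_map_fpoly_ge z : ns <= nc z -> rc f.[nc z] <= `|(map_poly rc f).[z]|.
Proof.
move=> le_ns_z; rewrite horner_fpoly horner_map_fpoly.
by apply: normc_prod_subr_ge => i /n_bnd /andP[-> /le_trans]; apply.
Qed.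

Lemma root_fpoly_sub1_normc z : root (map_poly rc (f - 1)) z ->
  ns <= nc z -> f.[nc z] <= 1.
Proof.
rewrite rmorphB rmorph1 root_sub1 => /eqP fz1 le_ns_z.
by have := normc_horner_map_fpoly_ge le_ns_z; rewrite fz1 normr1 (lecR _ 1).
Qed.

Lemma root_mulXsub_fpoly_sub1_normc m z : 0 <= m <= ns ->
    root (map_poly rc (('X - m%:P) * f - 1)) z -> ns <= nc z ->
  (nc z - m) * f.[nc z] <= 1.
Proof.
move=> /andP[m_ge0 m_le]; rewrite map_mulXsub_sub1 root_mulXsub_sub1 => /eqP gz1 le_ns_z.
rewrite -(lecR _ 1) rmorph1 -normr1 -gz1 normrM rmorphM.
apply: ler_pM; rewrite ?ler0c ?horner_fpoly_ge0 ?normc_subr_ge ?normc_horner_map_fpoly_ge //.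
by rewrite subr_ge0 (le_trans m_le).
Qed.

Lemma rho_fpoly_sub1 x : ns <= x -> f.[x] = 1 -> rho (f - 1) = x.
Proof.
move=> le_ns_x fx1.
apply: (rho_eq_profile last_node_ge0 le_ns_x _ fx1 horner_fpoly_lt root_fpoly_sub1_normc).
by rewrite root_sub1 fx1.
Qed.

Lemma rho_mulXsub_fpoly_sub1 m x : 0 <= m <= ns -> ns <= x ->
  (x - m) * f.[x] = 1 -> rho (('X - m%:P) * f - 1) = x.
Proof.
move=> m_bnd le_ns_x gx1; have /andP[_ m_le] := m_bnd.
apply: (rho_eq_profile (G := fun t => (t - m) * f.[t]) last_node_ge0 le_ns_x _ gx1).
- by rewrite root_mulXsub_sub1 gx1.
- by move=> u v; apply: horner_mulXsub_fpoly_lt.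
- by move=> z; apply: root_mulXsub_fpoly_sub1_normc.
Qed.

Lemma fpoly_eq1 : exists2 x, ns < x <= ns + 1 & f.[x] = 1.
Proof.
by apply: poly_eq1_between; rewrite ?horner_fpoly_last ?horner_fpoly_shift1_ge1 ?lerDl.
Qed.

Lemma mulXsub_fpoly_eq1 m : 0 <= m <= ns ->
  exists2 x, ns < x <= ns + 1 & (x - m) * f.[x] = 1.
Proof.
move=> /andP[m_ge0 m_le].
have [|||x x_bnd] := @poly_eq1_between _ (('X - m%:P) * f) ns (ns + 1).
- by rewrite lerDl.
- by rewrite horner_mulXsub horner_fpoly_last mulr0.
- rewrite horner_mulXsub; apply: (mulr_egte1 R).1 horner_fpoly_shift1_ge1; lra.
- by rewrite horner_mulXsub; exists x.
Qed.

Lemma fpoly_sub1_root_rho :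
  exists x0 : R,
    [/\ ns < x0 <= ns + 1, root (f - 1) x0,
        forall y : R, ns < y <= ns + 1 -> root (f - 1) y -> y = x0
      & rho (f - 1) = x0].
Proof.
have [x0 /andP[x0_gt x0_le] fx0] := fpoly_eq1.
have rho_f := rho_fpoly_sub1 (ltW x0_gt) fx0.
exists x0; split; rewrite ?x0_gt ?root_sub1 ?fx0 //.
move=> y /andP[y_gt _]; rewrite root_sub1 => /eqP fy.
by rewrite -(rho_fpoly_sub1 (ltW y_gt) fy).
Qed.

Lemma rho_mulXsub_fpoly_sub1_lt m : 0 <= m <= ns - 1 ->
  rho (('X - m%:P) * f - 1) < rho (f - 1).
Proof.
move=> /andP[m_ge0 m_le]; have m_bnd : 0 <= m <= ns by rewrite m_ge0; lra.
have [x0 /andP[x0_gt _] fx0] := fpoly_eq1.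
have [c /andP[c_gt _] gc] := mulXsub_fpoly_eq1 m_bnd.
rewrite (rho_fpoly_sub1 (ltW x0_gt) fx0) (rho_mulXsub_fpoly_sub1 m_bnd (ltW c_gt) gc).
have fc_lt1 : f.[c] < 1 by have := horner_fpoly_ge0 (ltW c_gt); nra.
by rewrite ltNge -horner_fpoly_le_mono ?inE ?(ltW c_gt) ?(ltW x0_gt) // fx0 -ltNge.
Qed.

(* At the solution y of (y - n_s) f(y) = 1 we have y - n_s <= 1, hence f(y) >= 1
   and x0 <= y; equality forces y - n_s = 1. *)
Lemma rho_mulXsub_last_fpoly_sub1 :
  rho (f - 1) <= rho (('X - ns%:P) * f - 1) /\
  (rho (('X - ns%:P) * f - 1) = rho (f - 1) <-> f.[ns + 1] = 1).
Proof.
have ns_bnd : 0 <= ns <= ns by rewrite last_node_ge0 lexx.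
have [x0 /andP[x0_gt _] fx0] := fpoly_eq1.
have [y /andP[y_gt y_le] gy] := mulXsub_fpoly_eq1 ns_bnd.
have rho_f := rho_fpoly_sub1 (ltW x0_gt) fx0.
have rho_g := rho_mulXsub_fpoly_sub1 ns_bnd (ltW y_gt) gy.
have fy_ge1 : 1 <= f.[y] by have := horner_fpoly_ge0 (ltW y_gt); nra.
split; first by rewrite rho_f rho_g -horner_fpoly_le_mono ?inE ?(ltW y_gt) ?(ltW x0_gt) // fx0.
split=> [|f_ns1].
  rewrite rho_f rho_g => y_x0.
  have x0_ns1 : x0 = ns + 1 by move: gy; rewrite y_x0 fx0 mulr1; lra.
  by rewrite -x0_ns1.
have ns1_ge : ns <= ns + 1 by rewrite lerDl.
have g_ns1 : (ns + 1 - ns) * f.[ns + 1] = 1 by rewrite f_ns1 mulr1 addrAC subrr add0r.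
by rewrite (rho_fpoly_sub1 ns1_ge f_ns1) (rho_mulXsub_fpoly_sub1 ns_bnd ns1_ge g_ns1).
Qed.

End Fpoly.

Theorem lemma6p1 (R : realType) (s : nat) (r : nat -> nat) (n : nat -> R)
  (hs : (0 < s)%N)
  (hr : forall i, (i < s)%N -> (0 < r i)%N)
  (hn0 : 0 <= n 0%N)
  (hinc : forall i, (i.+2 < s)%N -> n i < n i.+1)
  (hlast : (1 < s)%N -> n (s - 2)%N <= n (s - 1)%N - 1) :
  let f := fpoly s r n in
  let ns := n (s - 1)%N in
  [/\ (exists x0 : R,
         [/\ ns < x0 <= ns + 1, root (f - 1) x0,
             forall y : R, ns < y <= ns + 1 -> root (f - 1) y -> y = x0
           & rho (f - 1) = x0]),
      (forall m : R, 0 <= m <= ns - 1 ->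
         rho (('X - m%:P) * f - 1) < rho (f - 1))
    & rho (f - 1) <= rho (('X - ns%:P) * f - 1) /\
      (rho (('X - ns%:P) * f - 1) = rho (f - 1) <-> s = 1%N)].
Proof.
move=> f ns; have n_bnd := node_bounds hn0 hinc hlast.
have [le_rho eq_rho] := rho_mulXsub_last_fpoly_sub1 hs hr n_bnd.
split; first exact: fpoly_sub1_root_rho.
  by move=> m; apply: rho_mulXsub_fpoly_sub1_lt.
split=> //; rewrite eq_rho; split=> [f_ns1|s1]; last exact: horner_fpoly_single.
apply/eqP; rewrite eqn_leq hs andbT leqNgt; apply/negP => s_gt1.
have n0_lt : n 0%N < n (s - 1)%N.
  by have := first_node_le_last hn0 hinc hlast s_gt1; lra.
by have := horner_fpoly_shift1_gt1 hr n_bnd hs n0_lt; rewrite f_ns1 ltxx.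
Qed.
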